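(* Let $(S_n)_{n\in\mathbb{N}_0}$ be a demimartingale with $S_0\equiv 0$. Then for every $p\in(0,1)$ and every $n\in\mathbb{N}_0$, $$\mathbb{E}\Big[\Big(\sup_{0\le k\le n} S_k\Big)^p\Big]\le \frac{1}{1-p}\Big(\mathbb{E}\Big[-\inf_{0\le k\le n} S_k\Big]\Big)^p .$$
   Context: All random variables live on a common probability space. A sequence $(S_n)_{n\in\mathbb{N}_0}$ of integrable ($L^1$) real random variables is called a demimartingale if for every $j\ge 0$, $$\mathbb{E}\big[(S_{j+1}-S_j)\, f(S_0,S_1,\dots,S_j)\big]\ge 0$$ for every function $f:\mathbb{R}^{j+1}\to\mathbb{R}$ that is nondecreasing in each coordinate, whenever the expectation is defined. (Since $S_0\equiv0$ here, the dependence on $S_0$ is immaterial.) Note $\sup_{0\le k\le n}S_k\ge S_0=0$ and $-\inf_{0\le k\le n}S_k\ge 0$. *)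

From HB Require Import structures.
From mathcomp Require Import all_boot all_order all_algebra.
From mathcomp Require Import all_classical all_reals all_analysis.
Set Implicit Arguments. Unset Strict Implicit. Unset Printing Implicit Defensive.
Import Order.TTheory GRing.Theory Num.Theory.
Local Open Scope ring_scope.

Definition coord_nondecreasing {R : realType} (m : nat) (f : ('I_m -> R) -> R) :=
  forall (x : 'I_m -> R) (i : 'I_m) (t : R), x i <= t ->
    f x <= f (fun k => if k == i then t else x k).

(* A demimartingale (S_n)_{n >= 0}: each S_n is integrable, and for every j
   and every coordinatewise nondecreasing f, E[(S_{j+1}-S_j) f(S_0,...,S_j)] >= 0
   whenever this expectation is defined (the integrand is measurable and
   not both its positive and negative parts have infinite integral). *)
Definition demimartingale {d} {T : measurableType d} {R : realType}
  (P : probability T R) (S : nat -> T -> R) : Prop :=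
  (forall n, P.-integrable setT (fun w => (S n w)%:E)) /\
  forall (j : nat) (f : ('I_j.+1 -> R) -> R),
    coord_nondecreasing f ->
    let g := fun w => (S j.+1 w - S j w) * f (fun i : 'I_j.+1 => S i w) in
    measurable_fun setT g ->
    ((\int[P]_w (Num.max (g w) 0)%:E < +oo)%E \/
     (\int[P]_w (Num.max (- g w) 0)%:E < +oo)%E) ->
    (0 <= 'E_P[g])%E.

Definition run_sup {T} {R : realType} (S : nat -> T -> R) (n : nat) (w : T) : R :=
  \big[Num.max/S 0%N w]_(0 <= k < n.+1) S k w.
Definition run_inf {T} {R : realType} (S : nat -> T -> R) (n : nat) (w : T) : R :=
  \big[Num.min/S 0%N w]_(0 <= k < n.+1) S k w.

From HB Require Import structures.
From mathcomp Require Import all_boot all_order all_algebra.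
From mathcomp Require Import all_classical all_reals all_analysis.
From mathcomp Require Import ring lra measurable_realfun.
Import Order.TTheory GRing.Theory Num.Theory.
Local Open Scope ring_scope.

(* A maximal inequality for demimartingales with exponent 0 < p < 1.
   Write M_n = max_(k<=n) S_k, m_n = min_(k<=n) S_k and K = p / (1 - p), and fix
   a level c > 0.  Put b_j = max(c, M_j).  Concavity of x |-> x ^ p shows that
   the potential Phi(b, x) = b ^ p + K x b ^ (p - 1) does not increase when the
   level b is raised to a new maximum x; telescoping along the path yields
     M_n ^ p <= c ^ p + K c ^ (p - 1) (- m_n)
                + K * sum_(i<n) (S_(i+1) - S_i) b_i ^ (p - 1).
   Since y |-> max(c, y) ^ (p - 1) is nonincreasing, each b_i ^ (p - 1) is a
   coordinatewise nonincreasing function of (S_0, ..., S_i), so the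
   demimartingale property makes every term of the sum have nonpositive
   expectation: E[M_n ^ p] <= c ^ p + K c ^ (p - 1) E[- m_n].  Choosing
   c = E[- m_n] gives the claim when E[- m_n] > 0; otherwise let c -> 0.
   The file proves, in this order: the real inequalities, elementary facts on
   running extrema, the pathwise inequality, integrability facts, the
   consequence of the demimartingale property, the bound at a fixed level c,
   and finally the theorem. *)

Section PowerInequalities.
Variable R : realType.
Implicit Types p x b u v : R.

(* Concavity of x |-> x ^ p: its graph lies below the tangent line at b > 0.
   This is the weighted AM-GM inequality x^p b^(1-p) <= p x + (1-p) b. *)
Lemma powR_le_tangent p x b : 0 < p < 1 -> 0 <= x -> 0 < b ->
  x `^ p <= (1 - p) * b `^ p + p * x * b `^ (p - 1).
Proof.
move=> /andP[p_gt0 p_lt1] x_ge0 b_gt0.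
have q_gt0 : 0 < 1 - p by rewrite subr_gt0.
have am_gm : x `^ p * b `^ (1 - p) <= x * p + b * (1 - p).
  have := @conjugate_powR R (x `^ p) (b `^ (1 - p)) p^-1 (1 - p)^-1
    (powR_ge0 _ _) (powR_ge0 _ _).
  rewrite !invr_gt0 !invrK -!powRrM !mulfV ?gt_eqF // !powRr1 //; last exact: ltW.
  by apply=> //; lra.
have b_inv : b `^ (1 - p) * b `^ (p - 1) = 1.
  rewrite -powRD ?(gt_eqF b_gt0) ?implybT //.
  by rewrite addrA subrK subrr powRr0.
have b_mul : b * b `^ (p - 1) = b `^ p by rewrite mulr_powRB1 // ltW.
have -> : x `^ p = x `^ p * b `^ (1 - p) * b `^ (p - 1) by rewrite -mulrA b_inv mulr1.
apply: le_trans (ler_wpM2r (powR_ge0 _ _) am_gm) _.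
by rewrite -b_mul le_eqVlt; apply/orP; left; apply/eqP; ring.
Qed.

Lemma powR_pm1_antitone p u v : p < 1 -> 0 < u -> u <= v ->
  v `^ (p - 1) <= u `^ (p - 1).
Proof.
move=> p_lt1 u_gt0 uv; have v_gt0 : 0 < v by apply: lt_le_trans uv.
have -> : p - 1 = - (1 - p) by rewrite opprB.
rewrite !powRN lef_pV2 ?posrE ?powR_gt0 //.
by apply: ge0_ler_powR => //; rewrite ?nnegrE ?subr_ge0; apply: ltW.
Qed.

Lemma potential_raise p b x : 0 < p < 1 -> 0 < b ->
  Num.max b x `^ p + p / (1 - p) * x * Num.max b x `^ (p - 1) <=
  b `^ p + p / (1 - p) * x * b `^ (p - 1).
Proof.
move=> p01 b_gt0; have [_|bx] := leP x b; first exact: lexx.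
have /andP[p_gt0 p_lt1] := p01.
have q_neq0 : 1 - p != 0 by rewrite subr_eq0 gt_eqF.
have x_ge0 : 0 <= x by apply/ltW/(lt_trans b_gt0).
have q_gt0 : 0 < 1 - p by rewrite subr_gt0.
rewrite -mulrA mulr_powRB1 // -(ler_pM2l q_gt0).
have -> : (1 - p) * (x `^ p + p / (1 - p) * x `^ p) = x `^ p by field.
have -> : (1 - p) * (b `^ p + p / (1 - p) * x * b `^ (p - 1)) =
          (1 - p) * b `^ p + p * x * b `^ (p - 1) by field.
exact: powR_le_tangent.
Qed.

End PowerInequalities.

Section RunningExtrema.
Variables (T : Type) (R : realType) (S : nat -> T -> R).
Implicit Types (j : nat) (w : T).

Lemma run_sup_rec j w : run_sup S j.+1 w = Num.max (run_sup S j w) (S j.+1 w).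
Proof.
rewrite /run_sup (big_cat_nat_idem (maxxx _) (leq0n _) (leqnSn _)).
by rewrite big_nat1_id /= [Num.max (S _ w) _]maxC maxA -bigmax_idr.
Qed.

Lemma run_inf_rec j w : run_inf S j.+1 w = Num.min (run_inf S j w) (S j.+1 w).
Proof.
rewrite /run_inf (big_cat_nat_idem (minxx _) (leq0n _) (leqnSn _)).
by rewrite big_nat1_id /= [Num.min (S _ w) _]minC minA -bigmin_idr.
Qed.

Lemma run_sup0 w : run_sup S 0 w = S 0%N w.
Proof. by rewrite /run_sup big_nat1_id maxxx. Qed.

Lemma run_inf0 w : run_inf S 0 w = S 0%N w.
Proof. by rewrite /run_inf big_nat1_id minxx. Qed.

Lemma run_sup_ge_start j w : S 0%N w <= run_sup S j w.
Proof. exact: bigmax_ge_id. Qed.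

Lemma run_inf_le_start j w : run_inf S j w <= S 0%N w.
Proof. exact: bigmin_le_id. Qed.

Lemma run_inf_le_current j w : run_inf S j w <= S j w.
Proof.
by apply: (ge_bigmin_seq _ j xpredT (fun k => S k w)); rewrite ?mem_index_iota ?ltnSn.
Qed.

End RunningExtrema.

Section Pathwise.
Variables (T : Type) (R : realType) (S : nat -> T -> R) (w : T) (c p : R).
Hypotheses (S0 : S 0%N w = 0) (c_gt0 : 0 < c) (p01 : 0 < p < 1).

Let b j := Num.max c (run_sup S j w).
Let K := p / (1 - p).

Let b_gt0 j : 0 < b j.
Proof. by rewrite lt_max c_gt0. Qed.

Let K_ge0 : 0 <= K.
Proof. by case/andP: p01 => p_gt0 p_lt1; rewrite divr_ge0 ?subr_ge0 ?ltW. Qed.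

(* Telescoping potential_raise along the path:
   Phi(b_n, S_n) <= Phi(c, 0) + K * sum_(i<n) (S_(i+1) - S_i) b_i ^ (p - 1). *)
Lemma pathwise_telescope n :
  b n `^ p + K * S n w * b n `^ (p - 1) <=
  c `^ p + K * \sum_(0 <= i < n) (S i.+1 w - S i w) * b i `^ (p - 1).
Proof.
elim: n => [|n IH].
  by rewrite big_geq // /b run_sup0 S0 (max_idPl (ltW c_gt0)) !mulr0 mul0r.
have b_rec : b n.+1 = Num.max (b n) (S n.+1 w) by rewrite /b run_sup_rec maxA.
rewrite b_rec big_nat_recr //= mulrDr addrA.
have raise := @potential_raise R p (b n) (S n.+1 w) p01 (b_gt0 n); rewrite -/K in raise.
apply: le_trans raise _.
have -> : K * S n.+1 w * b n `^ (p - 1) =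
  K * S n w * b n `^ (p - 1) + K * ((S n.+1 w - S n w) * b n `^ (p - 1)) by ring.
by rewrite addrA lerD2r.
Qed.

Lemma pathwise_bound n :
  run_sup S n w `^ p <= c `^ p + K * c `^ (p - 1) * (- run_inf S n w) +
    K * \sum_(0 <= i < n) (S i.+1 w - S i w) * b i `^ (p - 1).
Proof.
have sup_ge0 : 0 <= run_sup S n w by rewrite -S0 run_sup_ge_start.
have sup_le : run_sup S n w `^ p <= b n `^ p.
  apply: ge0_ler_powR; rewrite ?nnegrE ?(ltW (b_gt0 n)) //; first exact/ltW/(andP p01).1.
  by rewrite /b le_max lexx orbT.
have last_le : - (S n w * b n `^ (p - 1)) <= c `^ (p - 1) * (- run_inf S n w).
  have [Sn_ge0|Sn_lt0] := leP 0 (S n w).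
    rewrite (@le_trans _ _ 0) // ?oppr_le0 ?mulr_ge0 ?powR_ge0 //.
    by rewrite oppr_ge0 -S0 run_inf_le_start.
  rewrite -mulNr mulrC ler_pM ?powR_ge0 ?oppr_ge0 ?(ltW Sn_lt0) //.
    by apply: powR_pm1_antitone; rewrite ?(andP p01).2 // /b le_max lexx.
  by rewrite lerN2 run_inf_le_current.
have := ler_wpM2l K_ge0 last_le; have := pathwise_telescope n.
rewrite mulrN -!mulrA; lra.
Qed.

End Pathwise.

Section CoordinateMaximum.
Context {R : realType}.

Definition coord_max {m} (x : 'I_m.+1 -> R) : R := \big[Num.max/x ord0]_(i < m.+1) x i.

Lemma coord_max_le m (x y : 'I_m.+1 -> R) :
  (forall i, x i <= y i) -> coord_max x <= coord_max y.
Proof.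
move=> xy; apply: bigmax_le => [|i _].
  exact: le_trans (xy ord0) (bigmax_ge_id _ _ _ _).
exact: le_trans (xy i) (le_bigmax _ _ _).
Qed.

Lemma run_sup_coord_max T (S : nat -> T -> R) j w :
  run_sup S j w = coord_max (fun i : 'I_j.+1 => S i w).
Proof. by rewrite /run_sup big_mkord. Qed.

End CoordinateMaximum.

Section IntegrableFunctions.
Context {d} {T : measurableType d} {R : realType}.

Lemma integrable_mul_bounded {mu : {measure set T -> \bar R}} {f g : T -> R} (C : R) :
  mu.-integrable setT (EFin \o f) -> measurable_fun setT g ->
  (forall w, `|g w| <= C) -> mu.-integrable setT (fun w => (f w * g w)%:E).
Proof.
move=> int_f mg g_le.
apply: (le_integrable measurableT _ _ (integrableZl measurableT C int_f)).
  apply/measurable_EFinP/measurable_funM => //.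
  exact/measurable_EFinP/(measurable_int _ int_f).
move=> w _ /=; rewrite lee_fin !normrM mulrC.
by rewrite ler_wpM2r // (le_trans (g_le w)) ?ler_norm.
Qed.

Lemma measurable_powR_comp (f : T -> R) (r : R) :
  measurable_fun setT f -> measurable_fun setT (fun w => f w `^ r).
Proof.
by move=> mf; rewrite (_ : (fun w => _) = (@powR R)^~ r \o f) //; exact: measurableT_comp.
Qed.

Lemma integral_affine (P : probability T R) (a k l : R) (f g : T -> R) :
  P.-integrable setT (EFin \o f) -> P.-integrable setT (EFin \o g) ->
  (\int[P]_w (a + k * f w + l * g w)%:E =
   a%:E + k%:E * \int[P]_w (f w)%:E + l%:E * \int[P]_w (g w)%:E)%E.
Proof.
move=> int_f int_g.
under eq_integral do rewrite !EFinD !EFinM.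
have int_a : P.-integrable setT (fun=> a%:E) by exact: finite_measure_integrable_cst.
rewrite integralD //; last exact: integrableZl.
  rewrite integralD //; last exact: integrableZl.
  rewrite (integral_cst P measurableT) [X in (_ * X)%E](_ : _ = 1%E) ?mule1.
    by rewrite !integralZl.
  exact: probability_setT.
by apply: integrableD => //; exact: integrableZl.
Qed.

Context {P : probability T R} {S : nat -> T -> R}.
Hypothesis int_S : forall k, P.-integrable setT (fun w => (S k w)%:E).

Let measurable_S k : measurable_fun setT (S k).
Proof. exact/measurable_EFinP/(measurable_int _ (int_S k)). Qed.

Lemma measurable_run_sup n : measurable_fun setT (run_sup S n).
Proof.
elim: n => [|n IH].
  by rewrite (_ : run_sup S 0 = S 0%N) //; apply/funext => w; exact: run_sup0.
rewrite (_ : run_sup S n.+1 = run_sup S n \max S n.+1); first exact: measurable_maxr.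
by apply/funext => w; exact: run_sup_rec.
Qed.

(* |min(a, b)| <= |a| + |b| propagates integrability to the running minimum. *)
Lemma integrable_run_inf n : P.-integrable setT (fun w => (run_inf S n w)%:E).
Proof.
elim: n => [|n IH].
  by rewrite (_ : run_inf S 0 = S 0%N) //; apply/funext => w; exact: run_inf0.
have run_infE : run_inf S n.+1 = run_inf S n \min S n.+1.
  by apply/funext => w; exact: run_inf_rec.
apply: (le_integrable measurableT _ _ (integrableD measurableT
  (integrable_abse IH) (integrable_abse (int_S n.+1)))).
  rewrite run_infE; apply/measurable_EFinP/measurable_minr => //.
  exact/measurable_EFinP/(measurable_int _ IH).
move=> w _; rewrite run_infE /= lee_fin.
rewrite [leRHS]ger0_norm ?addr_ge0 //.
by case: (leP (run_inf S n w) (S n.+1 w)) => _; rewrite ?lerDl ?lerDr.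
Qed.

Lemma integrable_neg_run_inf n :
  P.-integrable setT (fun w => (- run_inf S n w)%:E).
Proof.
apply: (eq_integrable measurableT _ _ _ (integrableN (integrable_run_inf n))).
by move=> w _; rewrite /= EFinN.
Qed.

Lemma integrable_increment j : P.-integrable setT (fun w => (S j.+1 w - S j w)%:E).
Proof.
apply: (eq_integrable measurableT _ _ _ (integrableB measurableT (int_S j.+1) (int_S j))).
by move=> w _; rewrite /= EFinB.
Qed.

End IntegrableFunctions.

Section DemimartingaleWeights.
Context {d} {T : measurableType d} {R : realType}.
Context {P : probability T R} {S : nat -> T -> R}.
Hypothesis S_demi : demimartingale P S.

(* A nonincreasing function phi of the running maximum M_j is a coordinatewise
   nonincreasing function of (S_0, ..., S_j), so the demimartingale property,
   applied to - phi (M_j), gives E[(S_(j+1) - S_j) phi(M_j)] <= 0. *)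
Lemma demimartingale_antitone_weight j (phi : R -> R) :
  (forall x y, x <= y -> phi y <= phi x) ->
  P.-integrable setT (fun w => ((S j.+1 w - S j w) * phi (run_sup S j w))%:E) ->
  (\int[P]_w ((S j.+1 w - S j w) * phi (run_sup S j w))%:E <= 0)%E.
Proof.
move=> phi_anti int_h.
set h := fun w => (S j.+1 w - S j w) * phi (run_sup S j w).
pose f (x : 'I_j.+1 -> R) := - phi (coord_max x).
have f_mono : coord_nondecreasing f.
  move=> x i t xt; rewrite /f lerN2; apply/phi_anti/coord_max_le => k.
  by case: eqP => // ->.
have int_negh : P.-integrable setT (fun w => (- h w)%:E).
  by apply: (eq_integrable measurableT _ _ _ (integrableN int_h)) => w _; rewrite /= EFinN.
pose g w := (S j.+1 w - S j w) * f (fun i : 'I_j.+1 => S i w).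
have gE : g = fun w => - h w.
  by apply/funext => w; rewrite /g /f /h -run_sup_coord_max mulrN.
have m_g : measurable_fun setT g.
  by rewrite gE; exact/measurable_EFinP/(measurable_int _ int_negh).
have pos_finite : (\int[P]_w (Num.max (g w) 0)%:E < +oo)%E.
  rewrite gE (eq_integral (fun w => ((fun w => (- h w)%:E)^\+ w)%E)).
    exact: integral_funepos_lt_pinfty.
  by move=> w _; rewrite funeposE EFin_max.
have integralN_h : (\int[P]_w (- h w)%:E = - \int[P]_w (h w)%:E)%E.
  rewrite -mulN1e -integralZl //; apply: eq_integral => w _.
  by rewrite mulN1e EFinN.
have := S_demi.2 j f f_mono m_g (or_introl pos_finite).
by rewrite -/g gE unlock integralN_h oppe_ge0.
Qed.

End DemimartingaleWeights.

Section FixedLevel.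
Context {d} {T : measurableType d} {R : realType}.
Context {P : probability T R} {S : nat -> T -> R} {c p : R}.
Hypotheses (S_demi : demimartingale P S) (S0 : forall w, S 0%N w = 0).
Hypotheses (c_gt0 : 0 < c) (p01 : 0 < p < 1).

Let int_S := S_demi.1.

Let weight j w := Num.max c (run_sup S j w) `^ (p - 1).

Let weight_antitone x y : x <= y -> Num.max c y `^ (p - 1) <= Num.max c x `^ (p - 1).
Proof.
move=> xy; apply: powR_pm1_antitone; rewrite ?(andP p01).2 ?lt_max ?c_gt0 //.
exact: le_max2.
Qed.

Lemma integrable_weighted_increment j :
  P.-integrable setT (fun w => ((S j.+1 w - S j w) * weight j w)%:E).
Proof.
apply: (integrable_mul_bounded (c `^ (p - 1)) (integrable_increment int_S j)).
  apply: measurable_powR_comp.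
  exact: measurable_maxr (measurable_cst _) (measurable_run_sup int_S j).
move=> w; rewrite ger0_norm ?powR_ge0 //.
by apply: powR_pm1_antitone; rewrite ?(andP p01).2 // le_max lexx.
Qed.

Lemma weighted_increment_le0 j :
  (\int[P]_w ((S j.+1 w - S j w) * weight j w)%:E <= 0)%E.
Proof.
exact: (demimartingale_antitone_weight S_demi j (fun y => Num.max c y `^ (p - 1))
  weight_antitone (integrable_weighted_increment j)).
Qed.

(* Integrating the pathwise inequality at the level c; the weighted increments
   contribute a nonpositive term. *)
Lemma expectation_bound_at_level n (e : R) :
  ('E_P[fun w => (- run_inf S n w)%R] = e%:E)%E ->
  ('E_P[fun w => (run_sup S n w `^ p)%R] <=
     (c `^ p + p / (1 - p) * c `^ (p - 1) * e)%:E)%E.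
Proof.
rewrite !unlock => negm_int.
set K := p / (1 - p).
have K_ge0 : 0 <= K by case/andP: p01 => p_gt0 p_lt1; rewrite divr_ge0 ?subr_ge0 ?ltW.
pose Z w := \sum_(0 <= i < n) (S i.+1 w - S i w) * weight i w.
have int_Z : P.-integrable setT (EFin \o Z).
  apply: (eq_integrable measurableT _ _ _ (integrable_sum measurableT (index_iota 0 n)
    (P := xpredT) (fun i _ => integrable_weighted_increment i))).
  by move=> w _; rewrite /Z /= sumEFin.
have Z_le0 : (\int[P]_w (Z w)%:E <= 0)%E.
  under eq_integral do rewrite /Z -sumEFin.
  rewrite integral_sum //; last exact: integrable_weighted_increment.
  by apply: sume_le0 => i _; exact: weighted_increment_le0.
have int_negm := integrable_neg_run_inf int_S n.
pose G w := c `^ p + K * c `^ (p - 1) * (- run_inf S n w) + K * Z w.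
have sup_le_G : (\int[P]_w (run_sup S n w `^ p)%:E <= \int[P]_w (G w)%:E)%E.
  apply: ge0_le_integral => //.
  - by move=> w _; rewrite lee_fin powR_ge0.
  - exact/measurable_EFinP/measurable_powR_comp/measurable_run_sup.
  - apply/measurable_EFinP/measurable_funD; last first.
      exact/measurable_funM/measurable_EFinP/(measurable_int _ int_Z).
    apply/measurable_funD => //; apply/measurable_funM => //.
    exact/measurable_EFinP/(measurable_int _ int_negm).
  - by move=> w _; rewrite lee_fin; exact: pathwise_bound.
apply: (le_trans sup_le_G); rewrite integral_affine // negm_int.
have [z Z_eq] : exists z, (\int[P]_w (Z w)%:E = z%:E)%E.
  by exists (fine (\int[P]_w (Z w)%:E)); rewrite fineK //; exact: integrable_fin_num int_Z.
rewrite Z_eq lee_fin in Z_le0; rewrite Z_eq -!EFinM -!EFinD lee_fin.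
by rewrite gerDl mulr_ge0_le0.
Qed.

End FixedLevel.

Theorem lemma2p1 (d : measure_display) (T : measurableType d) (R : realType)
  (P : probability T R) (S : nat -> T -> R) (p : R) (n : nat) :
  demimartingale P S ->
  (forall w, S 0%N w = 0) ->
  0 < p < 1 ->
  ('E_P[fun w => (run_sup S n w `^ p)%R] <=
     ((1 - p)^-1)%:E * ('E_P[fun w => (- run_inf S n w)%R] `^ p))%E.
Proof.
move=> S_demi S0 p01; have /andP[p_gt0 p_lt1] := p01.
have [e negm_E] : exists e, ('E_P[fun w => (- run_inf S n w)%R] = e%:E)%E.
  exists (fine 'E_P[fun w => (- run_inf S n w)%R]%E); rewrite fineK // unlock.
  exact: integrable_fin_num (integrable_neg_run_inf S_demi.1 n).
have e_ge0 : 0 <= e.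
  rewrite -lee_fin -negm_E; apply: expectation_ge0 => w.
  by rewrite oppr_ge0 -(S0 w) run_inf_le_start.
have bound c (c_gt0 : 0 < c) := expectation_bound_at_level S_demi S0 c_gt0 p01 n _ negm_E.
rewrite negm_E poweR_EFin -EFinM.
have [e0|e_gt0] := eqVneq e 0.
  (* E[- m_n] = 0: the bound at the level c = eps ^ (1/p) is eps, for every eps > 0 *)
  rewrite e0 powR0 ?gt_eqF // mulr0; apply/lee_addgt0Pr => eps eps_gt0.
  have := bound (eps `^ p^-1) (powR_gt0 _ eps_gt0).
  by rewrite e0 mulr0 addr0 -powRrM mulVf ?gt_eqF // powRr1 ?add0e // ltW.
(* E[- m_n] > 0: take the level c = E[- m_n] *)
have {}e_gt0 : 0 < e by rewrite lt_def e_gt0.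
apply: le_trans (bound e e_gt0) _; rewrite lee_fin.
rewrite -mulrA [_ * e]mulrC mulr_powRB1 // le_eqVlt; apply/orP; left; apply/eqP.
by field; rewrite subr_eq0 gt_eqF.
Qed.
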